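(* Let $(\Sigma,h)$ be an $n$-dimensional Riemannian manifold and $Y$ a vector field on $\Sigma$ with $|Y|^2\neq0$, and let $\widehat\nabla$ be the Levi-Civita connection of $h$. Then $D_{ij}:=|Y|^{-n-2}(Y_iY_j)_{\mathrm{tf}}$ is a TT tensor if and only if $Y^j(\widehat\nabla_{(i}Y_{j)})_{\mathrm{tf}}=0$. (In particular this holds if $Y$ is a conformal Killing vector field.)
   Context: $(T_{ij})_{\mathrm{tf}}$ denotes the $h$-trace-free part of a symmetric tensor, e.g. $(Y_iY_j)_{\mathrm{tf}}=Y_iY_j-\frac1n|Y|^2h_{ij}$. A TT tensor is a symmetric, trace-free, divergence-free $(0,2)$-tensor. *)

(* Local coordinate formulation:
   a Riemannian manifold (Sigma,h) is represented on a coordinate chart,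
   i.e. an open set U of R^n (row vectors) with a smooth field of
   symmetric positive definite matrices h. Tensors are given by their
   coordinate components. *)
From HB Require Import structures.
From mathcomp Require Import all_boot all_order all_algebra.
From mathcomp Require Import all_classical all_reals all_analysis.
Set Implicit Arguments. Unset Strict Implicit. Unset Printing Implicit Defensive.
Import Order.TTheory GRing.Theory Num.Theory.
Import numFieldNormedType.Exports.
Local Open Scope classical_set_scope.
Local Open Scope ring_scope.

Section Riem.
Variables (R : realType) (n : nat).
Notation pt := 'rV[R]_n.

Definition pd (i : 'I_n) (f : pt -> R) : pt -> R :=
  fun x => derive f x (delta_mx 0 i).

Fixpoint iter_pd (s : seq 'I_n) (f : pt -> R) : pt -> R :=
  match s with [::] => f | i :: s' => pd i (iter_pd s' f) end.

Definition smooth_on (U : set pt) (f : pt -> R) : Prop :=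
  forall (s : seq 'I_n) (x : pt), U x -> differentiable (iter_pd s f) x.

Definition riemannian_metric (U : set pt) (h : pt -> 'M[R]_n) : Prop :=
  (forall i j, smooth_on U (fun y => h y i j)) /\
  (forall x, U x -> (h x)^T = h x) /\
  (forall x, U x -> forall v : 'rV[R]_n, v != 0 -> 0 < (v *m h x *m v^T) 0 0).

Definition hinv (h : pt -> 'M[R]_n) (x : pt) : 'M[R]_n := invmx (h x).

Definition Gam (h : pt -> 'M[R]_n) (k i j : 'I_n) (x : pt) : R :=
  2^-1 * \sum_(l < n) hinv h x k l *
     (pd i (fun y => h y l j) x + pd j (fun y => h y l i) x
      - pd l (fun y => h y i j) x).

(* vector field Y with contravariant components Y^i (x) = Y x 0 i *)
Definition lowerY (h : pt -> 'M[R]_n) (Y : pt -> 'rV[R]_n) (i : 'I_n) (x : pt) : R :=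
  \sum_(j < n) h x i j * Y x 0 j.

Definition normY2 (h : pt -> 'M[R]_n) (Y : pt -> 'rV[R]_n) (x : pt) : R :=
  \sum_(i < n) Y x 0 i * lowerY h Y i x.

Definition cov1 (h : pt -> 'M[R]_n) (w : 'I_n -> pt -> R) (k i : 'I_n) (x : pt) : R :=
  pd k (w i) x - \sum_(l < n) Gam h l k i x * w l x.

Definition cov2 (h : pt -> 'M[R]_n) (T : 'I_n -> 'I_n -> pt -> R)
  (k i j : 'I_n) (x : pt) : R :=
  pd k (T i j) x - \sum_(l < n) Gam h l k i x * T l j x
                 - \sum_(l < n) Gam h l k j x * T i l x.

Definition htrace (h : pt -> 'M[R]_n) (T : 'I_n -> 'I_n -> pt -> R) (x : pt) : R :=
  \sum_(i < n) \sum_(j < n) hinv h x i j * T i j x.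

Definition hdiv (h : pt -> 'M[R]_n) (T : 'I_n -> 'I_n -> pt -> R) (i : 'I_n) (x : pt) : R :=
  \sum_(j < n) \sum_(k < n) hinv h x j k * cov2 h T k i j x.

Definition tf (h : pt -> 'M[R]_n) (T : 'I_n -> 'I_n -> pt -> R) : 'I_n -> 'I_n -> pt -> R :=
  fun i j x => T i j x - n%:R^-1 * htrace h T x * h x i j.

Definition TT_on (U : set pt) (h : pt -> 'M[R]_n) (T : 'I_n -> 'I_n -> pt -> R) : Prop :=
  forall x, U x ->
    (forall i j, T i j x = T j i x) /\ htrace h T x = 0 /\
    (forall i, hdiv h T i x = 0).

Definition Dtensor (h : pt -> 'M[R]_n) (Y : pt -> 'rV[R]_n) : 'I_n -> 'I_n -> pt -> R :=
  fun i j x => (Num.sqrt (normY2 h Y x)) ^- (n + 2) *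
     tf h (fun a b y => lowerY h Y a y * lowerY h Y b y) i j x.

Definition symcovY_tf (h : pt -> 'M[R]_n) (Y : pt -> 'rV[R]_n) : 'I_n -> 'I_n -> pt -> R :=
  tf h (fun i j x => 2^-1 * (cov1 h (lowerY h Y) i j x + cov1 h (lowerY h Y) j i x)).

End Riem.

From HB Require Import structures.
From mathcomp Require Import all_boot all_order all_algebra.
From mathcomp Require Import all_classical all_reals all_analysis.
From mathcomp Require Import ring lra.
Set Implicit Arguments. Unset Strict Implicit. Unset Printing Implicit Defensive.
Import Order.TTheory GRing.Theory Num.Theory.
Import numFieldNormedType.Exports.
Local Open Scope classical_set_scope.
Local Open Scope ring_scope.

(** Write [w] for the 1-form dual to [Y], [f = |Y|^2], [N = \hat\nabla w] and
  [s = f^(-(n+2)/2)], so that [D = s (w w - (f/n) h)]; [D] is symmetric and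
  trace-free for every [Y]. Metric compatibility gives [d_k f = 2 Y^a N_ka],
  hence [d_k s = -(n+2) s Y^a N_ka / f], and the Leibniz rule turns the
  divergence into
  [(div D)_i = 2 s (C_i - (n+2)/(2 f) (Y.C) w_i)], where
  [C_i = Y^j (\hat\nabla_(i Y_j))_tf]. Since [Y.w = f], contracting with [Y]
  shows that [C |-> C - (n+2)/(2 f) (Y.C) w] is injective as soon as
  [(n+2)/2 <> 1], which holds because [f <> 0] forces [n > 0]. *)

Section PartialDerivative.
Variables (R : realType) (n : nat).
Implicit Types (f g : 'rV[R]_n -> R) (x : 'rV[R]_n) (k : 'I_n).

Lemma pdB f g x k : differentiable f x -> differentiable g x ->
  pd k (fun y => f y - g y) x = pd k f x - pd k g x.
Proof. by move=> /diff_derivable df /diff_derivable dg; exact: deriveB. Qed.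

Lemma pdM f g x k : differentiable f x -> differentiable g x ->
  pd k (fun y => f y * g y) x = f x * pd k g x + g x * pd k f x.
Proof. by move=> /diff_derivable df /diff_derivable dg; exact: deriveM. Qed.

Lemma pd_cst (c : R) x k : pd k (fun=> c) x = 0.
Proof. exact: derive_cst. Qed.

Lemma pd_sum m (F : 'I_m -> 'rV[R]_n -> R) x k :
  (forall i, differentiable (F i) x) ->
  pd k (fun y => \sum_(i < m) F i y) x = \sum_(i < m) pd k (F i) x.
Proof.
by move=> dF; rewrite /pd -fct_sumE derive_sum // => i; exact: diff_derivable.
Qed.

Lemma differentiable_sumr m (F : 'I_m -> 'rV[R]_n -> R) x :
  (forall i, differentiable (F i) x) ->
  differentiable (fun y => \sum_(i < m) F i y) x.
Proof. by move=> dF; rewrite -fct_sumE; exact: differentiable_sum. Qed.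

Lemma near_eq_pd f g x k : (\forall y \near x, f y = g y) -> pd k f x = pd k g x.
Proof. exact: near_eq_derive. Qed.

Lemma pd_comp (phi : R -> R) f x k : differentiable f x -> derivable phi (f x) 1 ->
  pd k (phi \o f) x = phi^`()%classic (f x) * pd k f x.
Proof.
move=> df /[dup] /derivable1_diffP dphi phi1.
rewrite /pd deriveE; last exact: differentiable_comp.
by rewrite diff_comp // /= deriv1E // -deriveE // mulrC.
Qed.

Lemma is_derive_sqrt_powN m (t : R) : 0 < t ->
  is_derive t 1 (fun s => Num.sqrt s ^- m) (- (m%:R / 2) * (Num.sqrt t ^- m / t)).
Proof.
move=> t0; have q0 : Num.sqrt t != 0 by rewrite sqrtr_eq0 -ltNge.
have qq : Num.sqrt t ^+ 2 = t by rewrite sqr_sqrtr // ltW.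
have := is_deriveV _ (is_deriveX m (is_derive1_sqrt t0)).
rewrite exprfctE expf_neq0 // => /(_ isT) /is_derive_eq; apply.
rewrite /GRing.scale /=.
set q := Num.sqrt t in q0 qq *; rewrite -[in RHS]qq.
case: m => [|m]; first by rewrite !mul0r !mulr0 ?oppr0 ?mul0r.
rewrite [m.+1.-1]/= !exprS; field.
by rewrite q0 expf_neq0.
Qed.

Lemma differentiable_sqrt_powN f x m : differentiable f x -> 0 < f x ->
  differentiable (fun y => Num.sqrt (f y) ^- m) x.
Proof.
move=> df fx0; apply: (differentiable_comp (g := fun s => Num.sqrt s ^- m) df).
by apply/derivable1_diffP; have [] := is_derive_sqrt_powN m fx0.
Qed.

Lemma pd_sqrt_powN f x m k : differentiable f x -> 0 < f x ->
  pd k (fun y => Num.sqrt (f y) ^- m) x =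
  - (m%:R / 2) * (Num.sqrt (f x) ^- m / f x) * pd k f x.
Proof.
move=> df fx0; have D := is_derive_sqrt_powN m fx0.
by rewrite (pd_comp (phi := fun s => Num.sqrt s ^- m)) // derive1E derive_val.
Qed.

End PartialDerivative.

Lemma sum_mul_delta (R : pzSemiRingType) n (F : 'I_n -> R) c :
  \sum_(m < n) F m * (m == c)%:R = F c.
Proof. by under eq_bigr do rewrite mulr_natr mulrb; rewrite -big_mkcond big_pred1_eq. Qed.

Section PointwiseAlgebra.
Variables (R : realType) (n : nat) (h : 'rV[R]_n -> 'M[R]_n).
Variables (Y : 'rV[R]_n -> 'rV[R]_n) (x : 'rV[R]_n).
Hypothesis h_sym : (h x)^T = h x.
Hypothesis h_unit : h x \in unitmx.
Hypothesis pd_h_sym : forall k i j, pd k (fun y => h y i j) x = pd k (fun y => h y j i) x.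

Local Notation H i j := (h x i j).
Local Notation Hi i j := (hinv h x i j).
Local Notation dh k i j := (pd k (fun y => h y i j) x).
Local Notation Y' a := (Y x 0 a).
Local Notation w a := (lowerY h Y a x).
Local Notation N k a := (cov1 h (lowerY h Y) k a x).
Local Notation ni := (n%:R^-1 : R).

Lemma h_symE i j : H i j = H j i.
Proof. by rewrite -[in LHS]h_sym mxE. Qed.

Lemma hinv_symE i j : Hi i j = Hi j i.
Proof. by rewrite /hinv -{1}h_sym -trmx_inv mxE. Qed.

Lemma sum_h_hinv i j : \sum_k H i k * Hi k j = (i == j)%:R.
Proof. by have := congr1 (fun M : 'M[R]_n => M i j) (mulmxV h_unit); rewrite !mxE. Qed.

Lemma sum_hinv_h i j : \sum_k Hi i k * H k j = (i == j)%:R.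
Proof. by have := congr1 (fun M : 'M[R]_n => M i j) (mulVmx h_unit); rewrite !mxE. Qed.

Definition Gam_lower (c a b : 'I_n) : R := 2^-1 * (dh a c b + dh b c a - dh c a b).

Lemma sum_Gam_h a b c : \sum_l Gam h l a b x * H l c = Gam_lower c a b.
Proof.
rewrite /Gam /Gam_lower.
under eq_bigr => l _ do rewrite -mulrA big_distrl /=.
rewrite -big_distrr /= exchange_big /=; congr (_ * _).
rewrite -[RHS](sum_mul_delta (fun m => dh a m b + dh b m a - dh m a b) c).
apply: eq_bigr => m _; rewrite -sum_hinv_h big_distrr /=.
by apply: eq_bigr => l _; rewrite (hinv_symE l m); ring.
Qed.

Lemma sum_Gam_lowerY a b : \sum_l Gam h l a b x * w l = \sum_c Y' c * Gam_lower c a b.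
Proof.
under eq_bigr do rewrite big_distrr /=.
rewrite exchange_big /=; apply: eq_bigr => c _.
by rewrite -sum_Gam_h big_distrr /=; apply: eq_bigr => l _; ring.
Qed.

Lemma Gam_lower_sym_sum c k a : Gam_lower c k a + Gam_lower a k c = dh k a c.
Proof.
by rewrite /Gam_lower (pd_h_sym c k a) (pd_h_sym a k c) (pd_h_sym k c a); field.
Qed.

Lemma sum_hinv_lowerY j : \sum_i Hi i j * w i = Y' j.
Proof.
under eq_bigr do rewrite big_distrr /=.
rewrite exchange_big /= -[RHS](sum_mul_delta (fun c => Y' c) j).
apply: eq_bigr => c _; rewrite eq_sym -sum_hinv_h big_distrr /=.
by apply: eq_bigr => i _; rewrite (hinv_symE i j); ring.
Qed.

Lemma htrace_lowerY2 :
  htrace h (fun a b y => lowerY h Y a y * lowerY h Y b y) x = normY2 h Y x.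
Proof.
rewrite /htrace /normY2 exchange_big /=; apply: eq_bigr => j _.
by rewrite -sum_hinv_lowerY big_distrl /=; apply: eq_bigr => i _; ring.
Qed.

Lemma htrace_h : \sum_i \sum_j Hi i j * H i j = n%:R.
Proof.
transitivity (\sum_(i < n) (i == i)%:R : R).
  apply: eq_bigr => i _; rewrite -sum_hinv_h.
  by apply: eq_bigr => j _; rewrite (h_symE i j).
by under eq_bigr do rewrite eqxx; rewrite sumr_const card_ord.
Qed.

(* Metric compatibility: given the product rule for [lowerY], the left-hand
   side is [pd k (normY2 h Y) x]. *)
Lemma sum_lowerY_pd k (dY : 'I_n -> R) :
  (forall a, pd k (lowerY h Y a) x = \sum_b (H a b * dY b + Y' b * dh k a b)) ->
  \sum_a (Y' a * pd k (lowerY h Y a) x + w a * dY a) = 2 * \sum_a Y' a * N k a.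
Proof.
move=> dw.
pose A := \sum_a \sum_b Y' a * Y' b * dh k a b.
pose B := \sum_a \sum_b Y' a * H a b * dY b.
have Ydw : \sum_a Y' a * pd k (lowerY h Y a) x = B + A.
  rewrite /A /B -big_split /=; apply: eq_bigr => a _.
  by rewrite dw big_distrr -big_split /=; apply: eq_bigr => b _; ring.
have wdY : \sum_a w a * dY a = B.
  rewrite /B exchange_big /=; apply: eq_bigr => a _.
  by rewrite big_distrl /=; apply: eq_bigr => b _; rewrite (h_symE b a); ring.
have YGY : \sum_a Y' a * \sum_c Y' c * Gam_lower c k a = 2^-1 * A.
  pose S a c := Y' a * Y' c * Gam_lower c k a.
  have -> : \sum_a Y' a * \sum_c Y' c * Gam_lower c k a = \sum_a \sum_c S a c.
    apply: eq_bigr => a _; rewrite big_distrr /=.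
    by apply: eq_bigr => c _; rewrite /S; ring.
  have -> : A = \sum_a \sum_c S a c + \sum_a \sum_c S c a.
    rewrite -big_split /=; apply: eq_bigr => a _; rewrite -big_split /=.
    apply: eq_bigr => c _.
    by rewrite /S -(Gam_lower_sym_sum c k a); ring.
  by rewrite [X in _ + X]exchange_big /=; field.
have -> : \sum_a Y' a * N k a = B + A - 2^-1 * A.
  rewrite -YGY -Ydw -sumrB; apply: eq_bigr => a _.
  by rewrite /cov1 sum_Gam_lowerY; ring.
by rewrite big_split /= Ydw wdY; field.
Qed.

Local Notation f := (normY2 h Y x).
Local Notation E i j := (w i * w j - ni * f * H i j).

Lemma cov2_scaled_model (D : 'I_n -> 'I_n -> 'rV[R]_n -> R) (s ds : R) k i j :
  (forall a b, D a b x = s * E a b) ->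
  pd k (D i j) x = ds * E i j + s * (pd k (lowerY h Y i) x * w j
     + w i * pd k (lowerY h Y j) x - ni * (pd k (normY2 h Y) x * H i j + f * dh k i j)) ->
  cov2 h D k i j x = ds * E i j + s * (N k i * w j + w i * N k j
     - ni * pd k (normY2 h Y) x * H i j).
Proof.
move=> DE dD.
have GD a b c : \sum_l Gam h l a b x * D l c x =
    s * ((\sum_l Y' l * Gam_lower l a b) * w c - ni * f * Gam_lower c a b).
  rewrite -sum_Gam_lowerY -sum_Gam_h big_distrl big_distrr -sumrB big_distrr /=.
  by apply: eq_bigr => l _; rewrite DE; ring.
rewrite /cov2 [X in _ - X](eq_bigr (fun l => Gam h l k j x * D l i x)); last first.
  by move=> l _; rewrite !DE (h_symE i l); ring.
rewrite dD /cov1 !sum_Gam_lowerY !GD -(Gam_lower_sym_sum j k i); ring.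
Qed.

Local Notation trN := (\sum_k \sum_j Hi j k * N k j).

Lemma hdiv_scaled_model D (s : R) (ds df : 'I_n -> R) i :
  (forall k j, cov2 h D k i j x =
     ds k * E i j + s * (N k i * w j + w i * N k j - ni * df k * H i j)) ->
  hdiv h D i x = \sum_k ds k * Y' k * w i - ni * f * ds i
     + s * (\sum_k N k i * Y' k + w i * trN - ni * df i).
Proof.
move=> cov2E; rewrite /hdiv exchange_big /=.
have inner k : \sum_j Hi j k * cov2 h D k i j x =
    ds k * Y' k * w i - ni * f * (ds k * (k == i)%:R) + s * (N k i * Y' k)
    + s * w i * \sum_j Hi j k * N k j - s * ni * (df k * (k == i)%:R).
  rewrite -sum_hinv_lowerY eq_sym -sum_h_hinv.
  transitivity (\sum_j (ds k * w i * (Hi j k * w j) - ni * f * ds k * (H i j * Hi j k)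
    + s * N k i * (Hi j k * w j) + s * w i * (Hi j k * N k j)
    - s * ni * df k * (H i j * Hi j k))).
    by apply: eq_bigr => j _; rewrite cov2E; ring.
  by rewrite !(sumrB, big_split) /= -!mulr_sumr; ring.
rewrite (eq_bigr _ (fun k _ => inner k)) -(sum_mul_delta ds i) -(sum_mul_delta df i).
by rewrite !(sumrB, big_split) /= -!mulr_sumr; ring.
Qed.

Local Notation Q k := (\sum_a Y' a * N k a).
Local Notation P k := (\sum_a N a k * Y' a).
Local Notation C i := (\sum_j Y' j * symcovY_tf h Y i j x).

Lemma sum_Y_symcovY_tf i : C i = 2^-1 * (Q i + P i) - ni * trN * w i.
Proof.
have trE : htrace h (fun a b y => 2^-1 *
    (cov1 h (lowerY h Y) a b y + cov1 h (lowerY h Y) b a y)) x = trN.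
  have trE1 : \sum_a \sum_b Hi a b * N a b = trN.
    by apply: eq_bigr => a _; apply: eq_bigr => b _; rewrite hinv_symE.
  have trE2 : \sum_a \sum_b Hi a b * N b a = trN by rewrite exchange_big.
  rewrite /htrace; transitivity (2^-1 * (trN + trN)); last by field.
  rewrite -{1}trE1 -trE2 -big_split big_distrr /=; apply: eq_bigr => a _.
  rewrite -big_split big_distrr /=; apply: eq_bigr => b _; ring.
rewrite /symcovY_tf /tf trE.
transitivity (\sum_j (2^-1 * (Y' j * N i j) + 2^-1 * (N j i * Y' j)
  - ni * trN * (Y' j * H i j))).
  by apply: eq_bigr => j _; ring.
rewrite !(sumrB, big_split) /= -!mulr_sumr; congr (_ - _ * _); first by ring.
by apply: eq_bigr => j _; rewrite mulrC.
Qed.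

Lemma DtensorE i j : Dtensor h Y i j x = Num.sqrt f ^- (n + 2) * E i j.
Proof. by rewrite /Dtensor /tf htrace_lowerY2. Qed.

Lemma Dtensor_sym i j : Dtensor h Y i j x = Dtensor h Y j i x.
Proof. by rewrite !DtensorE (h_symE i j); congr (_ * (_ - _)); ring. Qed.

Lemma htrace_Dtensor : n%:R != 0 :> R -> htrace h (Dtensor h Y) x = 0.
Proof.
move=> n0; rewrite /htrace.
under eq_bigr do under eq_bigr do rewrite DtensorE.
set s := Num.sqrt f ^- (n + 2).
transitivity (\sum_a \sum_b (s * (Hi a b * (w a * w b)) - s * ni * f * (Hi a b * H a b))).
  by apply: eq_bigr => a _; apply: eq_bigr => b _; ring.
under eq_bigr do rewrite sumrB -!mulr_sumr.
have := htrace_lowerY2; rewrite /htrace /= => trw.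
by rewrite sumrB -!mulr_sumr trw htrace_h; field.
Qed.

Lemma hdiv_model_contraction D (s : R) i : n%:R != 0 :> R -> f != 0 ->
  (forall k j, cov2 h D k i j x = - ((n + 2)%:R / 2) * (s / f) * (2 * Q k) * E i j
     + s * (N k i * w j + w i * N k j - ni * (2 * Q k) * H i j)) ->
  hdiv h D i x = 2 * s * (C i - (n + 2)%:R / (2 * f) * (\sum_j Y' j * C j) * w i).
Proof.
move=> n0 f0 cov2E.
rewrite (hdiv_scaled_model (s := s) (df := fun k => 2 * Q k)
  (ds := fun k => - ((n + 2)%:R / 2) * (s / f) * (2 * Q k))) //.
pose M := \sum_k Y' k * Q k.
have sumQ : \sum_k - ((n + 2)%:R / 2) * (s / f) * (2 * Q k) * Y' k * w i
    = - ((n + 2)%:R / 2) * (s / f) * 2 * w i * M.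
  by rewrite /M mulr_sumr; apply: eq_bigr => k _; ring.
have sumP : \sum_k Y' k * P k = M.
  rewrite /M; under eq_bigr do rewrite mulr_sumr.
  rewrite exchange_big /=; apply: eq_bigr => k _.
  by rewrite mulr_sumr; apply: eq_bigr => a _; ring.
have sumC : \sum_j Y' j * C j = M - ni * trN * f.
  under eq_bigr do rewrite sum_Y_symcovY_tf.
  transitivity (2^-1 * (M + \sum_j Y' j * P j) - ni * trN * \sum_j Y' j * w j).
    rewrite /M -big_split /= !mulr_sumr -sumrB; apply: eq_bigr => j _; ring.
  by rewrite sumP; congr (_ - _); field.
rewrite sumQ sumC sum_Y_symcovY_tf; field.
by rewrite f0 n0.
Qed.

End PointwiseAlgebra.

Lemma rank_one_update_eq0 (R : fieldType) n (u v c : 'I_n -> R) (a : R) :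
  a * \sum_j u j * v j != 1 ->
  (forall i, c i - a * (\sum_j u j * c j) * v i = 0) -> forall i, c i = 0.
Proof.
move=> av1 cE.
have uc0 : \sum_j u j * c j = 0.
  have : (\sum_j u j * c j) * (1 - a * \sum_j u j * v j) = 0.
    transitivity (\sum_j (u j * c j - a * (\sum_k u k * c k) * (u j * v j))).
      by rewrite sumrB -mulr_sumr; ring.
    rewrite big1 // => j _.
    transitivity (u j * (c j - a * (\sum_k u k * c k) * v j)); first by ring.
    by rewrite cE mulr0.
  by move/eqP; rewrite mulf_eq0 subr_eq0 [1 == _]eq_sym (negbTE av1) orbF => /eqP.
by move=> i; have := cE i; rewrite uc0 mulr0 mul0r subr0.
Qed.

Section Chart.
Variables (R : realType) (n : nat) (U : set 'rV[R]_n).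
Variables (h : 'rV[R]_n -> 'M[R]_n) (Y : 'rV[R]_n -> 'rV[R]_n).
Hypothesis U_open : open U.
Hypothesis h_metric : riemannian_metric U h.
Hypothesis Y_smooth : forall a, smooth_on U (fun x => Y x 0 a).
Hypothesis normY2_neq0 : forall x, U x -> normY2 h Y x != 0.

Lemma h_sym_at y : U y -> (h y)^T = h y.
Proof. by case: h_metric => _ [+ _]; apply. Qed.

Lemma h_unit_at y : U y -> h y \in unitmx.
Proof.
move=> Uy; have [_ [_ h_pos]] := h_metric.
rewrite unitmxE unitfE; apply/negP => /det0P [v v0 vh].
by have := h_pos y Uy v v0; rewrite vh mul0mx mxE ltxx.
Qed.

Lemma normY2_gt0 y : U y -> 0 < normY2 h Y y.
Proof.
move=> Uy; have [_ [_ h_pos]] := h_metric.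
have Y0 : Y y != 0.
  apply: contra (normY2_neq0 Uy) => /eqP Y0.
  by rewrite /normY2 big1 // => i _; rewrite Y0 mxE mul0r.
have -> : normY2 h Y y = (Y y *m h y *m (Y y)^T) 0 0.
  rewrite mxE /normY2 /lowerY; under eq_bigr do rewrite big_distrr /=.
  rewrite exchange_big /=; apply: eq_bigr => j _.
  by rewrite !mxE big_distrl /=; apply: eq_bigr => i _; ring.
exact: h_pos.
Qed.

Lemma differentiable_h y i j : U y -> differentiable (fun z => h z i j) y.
Proof. by case: h_metric => h_smooth _ Uy; exact: (h_smooth i j [::]). Qed.

Lemma differentiable_Y y a : U y -> differentiable (fun z => Y z 0 a) y.
Proof. exact: (Y_smooth a [::]). Qed.

Lemma differentiable_lowerY y a : U y -> differentiable (lowerY h Y a) y.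
Proof.
move=> Uy; apply: differentiable_sumr => j.
by apply: differentiableM; [exact: differentiable_h | exact: differentiable_Y].
Qed.

Lemma differentiable_normY2 y : U y -> differentiable (normY2 h Y) y.
Proof.
move=> Uy; apply: differentiable_sumr => i.
by apply: differentiableM; [exact: differentiable_Y | exact: differentiable_lowerY].
Qed.

Variable x : 'rV[R]_n.
Hypothesis Ux : U x.

Lemma dim_neq0 : n%:R != 0 :> R.
Proof.
rewrite pnatr_eq0; apply: contra (normY2_neq0 Ux) => /eqP n0.
rewrite /normY2 big1 // => i.
by have := ltn_ord i; rewrite [in X in (_ < X)%N -> _]n0.
Qed.

Lemma near_U : \forall y \near x, U y.
Proof. exact: open_nbhs_nbhs. Qed.

Lemma pd_h_sym k i j : pd k (fun y => h y i j) x = pd k (fun y => h y j i) x.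
Proof.
apply: near_eq_pd; apply: filterS near_U => y Uy.
by rewrite -[in LHS](h_sym_at Uy) mxE.
Qed.

Lemma pd_lowerY k a : pd k (lowerY h Y a) x =
  \sum_b (h x a b * pd k (fun y => Y y 0 b) x + Y x 0 b * pd k (fun y => h y a b) x).
Proof.
rewrite /lowerY pd_sum => [|b]; last first.
  by apply: differentiableM; [exact: differentiable_h | exact: differentiable_Y].
apply: eq_bigr => b _.
by rewrite pdM //; [exact: differentiable_h | exact: differentiable_Y].
Qed.

Lemma pd_normY2 k :
  pd k (normY2 h Y) x = 2 * \sum_a Y x 0 a * cov1 h (lowerY h Y) k a x.
Proof.
rewrite -(sum_lowerY_pd (h_sym_at Ux) (h_unit_at Ux) pd_h_sym (pd_lowerY k)).
rewrite /normY2 pd_sum => [|a]; last first.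
  by apply: differentiableM; [exact: differentiable_Y | exact: differentiable_lowerY].
apply: eq_bigr => a _.
by rewrite pdM //; [exact: differentiable_Y | exact: differentiable_lowerY].
Qed.

Local Notation w a := (lowerY h Y a x).
Local Notation f := (normY2 h Y x).
Local Notation ni := (n%:R^-1 : R).
Local Notation E i j := (w i * w j - ni * f * h x i j).
Local Notation S := (fun y => Num.sqrt (normY2 h Y y) ^- (n + 2)).

Lemma pd_Dtensor k i j : pd k (Dtensor h Y i j) x =
  pd k S x * E i j + S x * (pd k (lowerY h Y i) x * w j + w i * pd k (lowerY h Y j) x
    - ni * (pd k (normY2 h Y) x * h x i j + f * pd k (fun y => h y i j) x)).
Proof.
have dS := differentiable_sqrt_powN (n + 2) (differentiable_normY2 Ux)
  (normY2_gt0 Ux).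
have dw a := differentiable_lowerY a Ux.
have dfh : differentiable (fun y => normY2 h Y y * h y i j) x.
  by apply: differentiableM; [exact: differentiable_normY2 | exact: differentiable_h].
have dni : differentiable (fun=> ni) x by exact: differentiable_cst.
rewrite (@near_eq_pd _ _ _ (fun y => S y * (lowerY h Y i y * lowerY h Y j y
    - ni * (normY2 h Y y * h y i j)))); last first.
  apply: filterS near_U => y Uy.
  by rewrite (DtensorE Y (h_sym_at Uy) (h_unit_at Uy)) mulrA.
rewrite pdM //; last by apply: differentiableB; apply: differentiableM.
rewrite pdB; [|exact: differentiableM|exact: differentiableM].
rewrite !pdM //; [|exact: differentiable_normY2|exact: differentiable_h].
rewrite pd_cst; ring.
Qed.

Local Notation N k a := (cov1 h (lowerY h Y) k a x).
Local Notation Q k := (\sum_a Y x 0 a * N k a).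
Local Notation C i := (\sum_j Y x 0 j * symcovY_tf h Y i j x).

Lemma cov2_Dtensor k i j : cov2 h (Dtensor h Y) k i j x =
  - ((n + 2)%:R / 2) * (S x / f) * (2 * Q k) * E i j
  + S x * (N k i * w j + w i * N k j - ni * (2 * Q k) * h x i j).
Proof.
rewrite (cov2_scaled_model (h_sym_at Ux) (h_unit_at Ux) pd_h_sym
  (DtensorE Y (h_sym_at Ux) (h_unit_at Ux)) (pd_Dtensor k i j)).
by rewrite (pd_sqrt_powN (n + 2) k (differentiable_normY2 Ux) (normY2_gt0 Ux)) pd_normY2.
Qed.

Lemma hdiv_Dtensor i : hdiv h (Dtensor h Y) i x =
  2 * S x * (C i - (n + 2)%:R / (2 * f) * (\sum_j Y x 0 j * C j) * w i).
Proof.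
exact: (hdiv_model_contraction (h_sym_at Ux) (h_unit_at Ux) dim_neq0 (normY2_neq0 Ux)
  (fun k j => cov2_Dtensor k i j)).
Qed.

Lemma TT_at_iff :
  (forall i j, Dtensor h Y i j x = Dtensor h Y j i x) /\ htrace h (Dtensor h Y) x = 0
    /\ (forall i, hdiv h (Dtensor h Y) i x = 0) <-> forall i, C i = 0.
Proof.
split=> [[_ [_ div0]] | C0]; last first.
  split; first exact: (Dtensor_sym Y (h_sym_at Ux) (h_unit_at Ux)).
  split=> [|i]; first exact: (htrace_Dtensor Y (h_sym_at Ux) (h_unit_at Ux) dim_neq0).
  rewrite hdiv_Dtensor C0 big1 => [|j _]; last by rewrite C0 mulr0.
  by rewrite mulr0 mul0r subr0 mulr0.
have S0 : 2 * S x != 0.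
  by rewrite mulf_neq0 // invr_eq0 expf_neq0 // sqrtr_eq0 -ltNge normY2_gt0.
apply: (rank_one_update_eq0 (u := fun j => Y x 0 j) (v := fun j => w j)
  (a := (n + 2)%:R / (2 * f))) => [|i]; last first.
  by have /eqP := div0 i; rewrite hdiv_Dtensor mulf_eq0 (negbTE S0) => /eqP.
have -> : (n + 2)%:R / (2 * f) * f = (n + 2)%:R / 2 by field; rewrite normY2_neq0.
have n0 : 0 < n%:R :> R by rewrite lt0r dim_neq0 ler0n.
by rewrite natrD; apply/eqP => e; lra.
Qed.

End Chart.

Unset Implicit Arguments. Set Strict Implicit.

Theorem lemma1 (R : realType) (n : nat) (U : set 'rV[R]_n)
  (h : 'rV[R]_n -> 'M[R]_n) (Y : 'rV[R]_n -> 'rV[R]_n) :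
  open U ->
  riemannian_metric U h ->
  (forall a, smooth_on U (fun x => Y x 0 a)) ->
  (forall x, U x -> normY2 h Y x != 0) ->
  TT_on U h (Dtensor h Y) <->
  (forall x, U x -> forall i : 'I_n,
     \sum_(j < n) Y x 0 j * symcovY_tf h Y i j x = 0).
Proof.
move=> U_open h_metric Y_smooth Y_nonnull.
split=> [TT x Ux | C0 x Ux].
  exact/(TT_at_iff U_open h_metric Y_smooth Y_nonnull Ux)/TT.
exact/(TT_at_iff U_open h_metric Y_smooth Y_nonnull Ux)/C0.
Qed.
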